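(* Let $\mathit{TS}_1=(\mathcal{S}_1,\mathcal{E}_1,\mathcal{I}_1,\to_1)$, $\mathit{TS}_2=(\mathcal{S}_2,\mathcal{E}_2,\mathcal{I}_2,\to_2)$ be LTSs and let $\psi\subseteq\mathcal{E}_1^\omega\times\mathcal{E}_2^\omega$ be a safety relation. If $(\mathcal{I}_1,\mathcal{I}_2,\psi)\in\texttt{fe}$, then for every $\tau_1\in\mathit{Traces}(\mathcal{I}_1)$ there exists $\tau_2\in\mathit{Traces}(\mathcal{I}_2)$ with $(\tau_1,\tau_2)\in\psi$.
   Context: LTS $(\mathcal{S},\mathcal{E},\mathcal{I},\to)$: states, observable events, initial state, and $\to\subseteq\mathcal{S}\times(\mathcal{E}\cup\{\emptyset\})\times\mathcal{S}$, label $\emptyset$ marking silent steps. $\to^*$ is the reflexive transitive closure of silent steps; for $e\in\mathcal{E}$, $s\overset{e}{\rightsquigarrow}s'$ means $s\to^*s''\xrightarrow{e}s'$ for some $s''$. $\mathit{Traces}(s)$ is the set of $\tau\in\mathcal{E}^\omega$ such that some $\pi\in\mathcal{S}^\omega$ has $\pi_0=s$ and $\pi_i\overset{\tau[i]}{\rightsquigarrow}\pi_{i+1}$ for all $i$. Safety closure $|\psi|_{\mathit{safe}}=\{(\tau_1,\tau_2)\mid\forall n.\exists\tau_1',\tau_2'.(\tau_1[0..n)\tau_1',\tau_2[0..n)\tau_2')\in\psi\}$ ($\tau[0..n)$ = prefix of length $n$); $\psi$ is a safety relation iff $|\psi|_{\mathit{safe}}\subseteq\psi$. Derivative $\Delta_{e_1,e_2}(\psi)=\{(\tau_1,\tau_2)\mid(e_1\tau_1,e_2\tau_2)\in\psi\}$.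 For $R\subseteq\mathcal{S}_1\times\mathcal{S}_2\times\mathcal{P}(\mathcal{E}_1^\omega\times\mathcal{E}_2^\omega)$: $\texttt{feF}(R)=\{(s_1,s_2,\psi)\mid\forall e_1,s_1'.\ s_1\overset{e_1}{\rightsquigarrow}_1s_1'\Rightarrow\exists e_2,s_2'.\ s_2\overset{e_2}{\rightsquigarrow}_2s_2'\wedge\Delta_{e_1,e_2}(\psi)\neq\emptyset\wedge(s_1',s_2',\Delta_{e_1,e_2}(\psi))\in R\}$, a monotone operator; $\texttt{fe}$ is its greatest fixed point. *)

From Stdlib Require Import Arith.

Set Implicit Arguments.

(* A labelled transition system (S, E, I, ->); the label None is the silent
   label (written ∅ in the paper), Some e an observable event e. *)
Record LTS := {
  St : Type;
  Ev : Type;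
  Init : St;
  step : St -> option Ev -> St -> Prop
}.

Inductive silent_star (T : LTS) : St T -> St T -> Prop :=
| ss_refl s : silent_star T s s
| ss_step s s' s'' : step T s None s' -> silent_star T s' s'' -> silent_star T s s''.

Definition weak_step (T : LTS) (s : St T) (e : Ev T) (s' : St T) : Prop :=
  exists s'', silent_star T s s'' /\ step T s'' (Some e) s'.

Definition word (E : Type) := nat -> E.

Definition Traces (T : LTS) (s : St T) : word (Ev T) -> Prop :=
  fun tau => exists pi : nat -> St T,
    pi 0 = s /\ forall i, weak_step T (pi i) (tau i) (pi (S i)).

Definition hyperrel (E1 E2 : Type) := word E1 -> word E2 -> Prop.

Definition prefix_app (E : Type) (n : nat) (tau tau' : word E) : word E :=
  fun i => if i <? n then tau i else tau' (i - n).

Definition safe_closure (E1 E2 : Type) (psi : hyperrel E1 E2) : hyperrel E1 E2 :=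
  fun t1 t2 => forall n, exists t1' t2',
    psi (prefix_app n t1 t1') (prefix_app n t2 t2').

Definition safety (E1 E2 : Type) (psi : hyperrel E1 E2) : Prop :=
  forall t1 t2, safe_closure psi t1 t2 -> psi t1 t2.

Definition cons_word (E : Type) (e : E) (t : word E) : word E :=
  fun i => match i with 0 => e | S j => t j end.

Definition deriv (E1 E2 : Type) (e1 : E1) (e2 : E2) (psi : hyperrel E1 E2)
  : hyperrel E1 E2 :=
  fun t1 t2 => psi (cons_word e1 t1) (cons_word e2 t2).

Definition nonempty_rel (E1 E2 : Type) (psi : hyperrel E1 E2) : Prop :=
  exists t1 t2, psi t1 t2.

Definition frel (T1 T2 : LTS) := St T1 -> St T2 -> hyperrel (Ev T1) (Ev T2) -> Prop.

Definition feF (T1 T2 : LTS) (R : frel T1 T2) : frel T1 T2 :=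
  fun s1 s2 psi => forall e1 s1', weak_step T1 s1 e1 s1' ->
    exists e2 s2', weak_step T2 s2 e2 s2' /\
      nonempty_rel (deriv e1 e2 psi) /\ R s1' s2' (deriv e1 e2 psi).

(* fe = greatest fixed point of feF (Knaster–Tarski: union of all
   post-fixed points R ⊆ feF R) *)
Definition fe (T1 T2 : LTS) : frel T1 T2 :=
  fun s1 s2 psi => exists R : frel T1 T2,
    (forall a b p, R a b p -> feF R a b p) /\ R s1 s2 psi.

(* Run the post-fixed point R witnessing [fe] along the given trace of T1:
   each observable step of T1 is answered by a weak step of T2, and the
   relation is replaced by its derivative along the two events, which stays
   nonempty.  Dependent choice turns this into an infinite answering trace
   tau2.  The relation reached after n steps is the residual of psi along the
   length-n prefixes of tau1 and tau2, so every pair of prefixes extends into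
   psi; psi being a safety relation, it contains (tau1, tau2). *)
From Stdlib Require Import Arith Lia ClassicalEpsilon FunctionalExtensionality.

Set Implicit Arguments.

Lemma prefix_app_0 (E : Type) (tau t : word E) : prefix_app 0 tau t = t.
Proof.
  apply functional_extensionality; intro i; unfold prefix_app; simpl.
  now rewrite Nat.sub_0_r.
Qed.

Lemma prefix_app_cons (E : Type) (n : nat) (tau t : word E) :
  prefix_app n tau (cons_word (tau n) t) = prefix_app (S n) tau t.
Proof.
  apply functional_extensionality; intro i; unfold prefix_app, cons_word.
  destruct (Nat.ltb_spec i n), (Nat.ltb_spec i (S n)); try lia; auto.
  - assert (i = n) by lia; subst. now rewrite Nat.sub_diag.
  - destruct (i - n) eqn:Hi; [lia|]. f_equal; lia.
Qed.

Definition residual (E1 E2 : Type) (n : nat) (t1 : word E1) (t2 : word E2)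
  (psi : hyperrel E1 E2) : hyperrel E1 E2 :=
  fun u1 u2 => psi (prefix_app n t1 u1) (prefix_app n t2 u2).

Lemma residual_0 (E1 E2 : Type) (t1 : word E1) (t2 : word E2)
  (psi : hyperrel E1 E2) :
  residual 0 t1 t2 psi = psi.
Proof.
  apply functional_extensionality; intro u1.
  apply functional_extensionality; intro u2.
  unfold residual. now rewrite !prefix_app_0.
Qed.

Lemma residual_S (E1 E2 : Type) (n : nat) (t1 : word E1) (t2 : word E2)
  (psi : hyperrel E1 E2) :
  residual (S n) t1 t2 psi = deriv (t1 n) (t2 n) (residual n t1 t2 psi).
Proof.
  apply functional_extensionality; intro u1.
  apply functional_extensionality; intro u2.
  unfold deriv, residual. now rewrite !prefix_app_cons.
Qed.

Lemma nonempty_rel_deriv (E1 E2 : Type) (e1 : E1) (e2 : E2) (psi : hyperrel E1 E2) :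
  nonempty_rel (deriv e1 e2 psi) -> nonempty_rel psi.
Proof. intros (u1 & u2 & H). do 2 eexists; exact H. Qed.

Section DependentChoice.

Variables (A B : Type) (P : nat -> A -> Prop) (Q : nat -> A -> B -> A -> Prop).
Variables (a0 : A) (Ha0 : P 0 a0).
Hypothesis next_exists :
  forall n a, P n a -> exists b a', P (S n) a' /\ Q n a b a'.

Let next n (x : {a | P n a}) :
  {p : B * {a' | P (S n) a'} | Q n (proj1_sig x) (fst p) (proj1_sig (snd p))}.
Proof.
  apply constructive_indefinite_description.
  destruct x as [a Ha]; destruct (next_exists Ha) as (b & a' & Ha' & HQ).
  now exists (b, exist _ a' Ha').
Defined.

Let Fixpoint chain n : {a | P n a} :=
  match n with
  | 0 => exist _ a0 Ha0
  | S m => snd (proj1_sig (next (chain m)))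
  end.

Lemma dependent_choice_labelled :
  exists (f : nat -> A) (g : nat -> B),
    f 0 = a0 /\ forall n, Q n (f n) (g n) (f (S n)).
Proof.
  exists (fun n => proj1_sig (chain n)),
         (fun n => fst (proj1_sig (next (chain n)))).
  split; [reflexivity|]. intro n; exact (proj2_sig (next (chain n))).
Qed.

End DependentChoice.

Section AnswerTrace.

Variables (T1 T2 : LTS) (R : frel T1 T2).
Hypothesis R_postfixed : forall s1 s2 psi, R s1 s2 psi -> feF R s1 s2 psi.

Lemma postfixed_answer_trace {pi1 : nat -> St T1} {tau1 : word (Ev T1)} s2 psi :
  (forall i, weak_step T1 (pi1 i) (tau1 i) (pi1 (S i))) ->
  R (pi1 0) s2 psi ->
  exists (pi2 : nat -> St T2) (tau2 : word (Ev T2)),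
    pi2 0 = s2 /\
    forall n, weak_step T2 (pi2 n) (tau2 n) (pi2 (S n)) /\
              nonempty_rel (residual (S n) tau1 tau2 psi).
Proof.
  intros Hpi1 HR.
  set (P := fun n (x : St T2 * hyperrel (Ev T1) (Ev T2)) =>
              R (pi1 n) (fst x) (snd x)).
  set (Q := fun n (x : St T2 * hyperrel (Ev T1) (Ev T2)) e2 x' =>
              weak_step T2 (fst x) e2 (fst x') /\
              snd x' = deriv (tau1 n) e2 (snd x) /\ nonempty_rel (snd x')).
  destruct (dependent_choice_labelled P Q (s2, psi) HR) as (f & tau2 & Hf0 & Hf).
  - intros n [s phi] Hs.
    destruct (R_postfixed Hs (Hpi1 n)) as (e2 & s' & Hstep & Hne & HR').
    exists e2, (s', deriv (tau1 n) e2 phi); repeat split; assumption.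
  - assert (Hres : forall n, snd (f n) = residual n tau1 tau2 psi).
    { induction n.
      - now rewrite Hf0, residual_0.
      - destruct (Hf n) as (_ & Hder & _). now rewrite Hder, IHn, residual_S. }
    exists (fun n => fst (f n)), tau2; split; [now rewrite Hf0|].
    intro n; destruct (Hf n) as (Hstep & _ & Hne).
    rewrite <- Hres; auto.
Qed.

End AnswerTrace.

Theorem mainTheorem5 (T1 T2 : LTS) (psi : hyperrel (Ev T1) (Ev T2)) :
  safety psi ->
  fe T1 T2 (Init T1) (Init T2) psi ->
  forall tau1, Traces T1 (Init T1) tau1 ->
  exists tau2, Traces T2 (Init T2) tau2 /\ psi tau1 tau2.
Proof.
  intros Hsafe (R & Hpost & HR) tau1 (pi1 & Hpi10 & Hpi1).
  rewrite <- Hpi10 in HR.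
  destruct (postfixed_answer_trace Hpost Hpi1 HR) as (pi2 & tau2 & Hpi20 & Hpi2).
  exists tau2; split.
  - exists pi2; split; [exact Hpi20|]. intro n; apply Hpi2.
  - apply Hsafe; intro n.
    destruct (Hpi2 n) as (_ & Hne). rewrite residual_S in Hne.
    exact (nonempty_rel_deriv Hne).
Qed.
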